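(* Let $a\in C^1(\mathbb{R})$ be real valued. For $C>0$ with $a(C^2)>0$ put $\omega=\omega(C)=a(C^2)^2/4$ and $\psi_\omega(x)=Ce^{-\sqrt\omega|x|}$, and write $a=a(C^2)$, $a'=a'(C^2)$. Consider $\int|\psi_\omega|^2dx$ as a function of $\omega$ along this family (locally, near a point with $a'\neq0$, where $C\mapsto\omega(C)$ is locally invertible). Then $$ \partial_\omega\int|\psi_\omega(x)|^2dx<0\quad\text{if } a'\in(-\infty,0)\cup(a/C^2,+\infty), $$ and $$ \partial_\omega\int|\psi_\omega(x)|^2dx>0\quad\text{if } 0<a'<a/C^2. $$ *)

From Stdlib Require Import Reals.
From Coquelicot Require Import Coquelicot.
Open Scope R_scope.

Definition omega_of (a : R -> R) (C : R) : R := (a (C ^ 2)) ^ 2 / 4.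

Definition psi (w C x : R) : R := C * exp (- sqrt w * Rabs x).

Definition mass (w C : R) : R :=
  RInt_gen (fun x => (Rabs (psi w C x)) ^ 2)
           (Rbar_locally m_infty) (Rbar_locally p_infty).

(* For w > 0 the mass is explicit: int |psi_w|^2 = C^2 int exp (-2 sqrt w |x|) dx = C^2 / sqrt w.
   Along the family C = Cinv w, the inverse function rule gives Cinv' = 1 / omega'(C)
   = 1 / (a a' C), and sqrt w = a / 2, so the derivative of C^2 / sqrt w at w(C) is
   2 C Cinv' / sqrt w - C^2 / (2 sqrt w ^ 3) = 4 / a^3 * (a / a' - C^2),
   whose sign is that of a / a' - C^2; comparing a / a' with C^2 gives both cases. *)

From Stdlib Require Import Reals Lra.
From Coquelicot Require Import Coquelicot.
Open Scope R_scope.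

Lemma filterlim_at_point (f : R -> R) (x l : R) :
  f x = l -> filterlim f (at_point x) (locally l).
Proof. intros <- P HP. exact (locally_singleton _ _ HP). Qed.

Lemma is_RInt_gen_of_is_derive {Fa Fb : (R -> Prop) -> Prop}
  {FFa : Filter Fa} {FFb : Filter Fb} (F f : R -> R) (la lb : R) :
  (forall x, is_derive F x (f x)) -> (forall x, continuous f x) ->
  filterlim F Fa (locally la) -> filterlim F Fb (locally lb) ->
  is_RInt_gen f Fa Fb (lb - la).
Proof.
  intros HF Hf Ha Hb.
  assert (DF : forall x, Derive F x = f x) by (intros x; now apply is_derive_unique).
  apply (is_RInt_gen_ext (Derive F)).
  { apply filter_forall; intros ab x _; apply DF. }
  apply is_RInt_gen_Derive; auto; apply filter_forall; intros ab x _.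
  - now exists (f x).
  - apply (continuous_ext f); auto.
Qed.

Lemma is_lim_exp_scal_m_infty (c : R) : 0 < c ->
  is_lim (fun x => exp (c * x)) m_infty 0.
Proof.
  intros Hc. apply (is_lim_comp exp (fun x => c * x) m_infty 0 m_infty).
  - exact is_lim_exp_m.
  - apply is_lim_spec; intros M; exists (M / c); intros x Hx.
    rewrite Rmult_comm; apply Rlt_div_r; lra.
  - now exists 0.
Qed.

Lemma is_lim_exp_neg_scal_p_infty (c : R) : 0 < c ->
  is_lim (fun x => exp (- c * x)) p_infty 0.
Proof.
  intros Hc. apply (is_lim_ext (fun x => exp (c * - x))); [intros x; f_equal; ring |].
  apply (is_lim_comp (fun y => exp (c * y)) (fun x => - x) p_infty 0 m_infty).
  - now apply is_lim_exp_scal_m_infty.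
  - apply (is_lim_opp _ p_infty p_infty), is_lim_id.
  - now exists 0.
Qed.

Lemma is_RInt_gen_exp_m_infty (c : R) : 0 < c ->
  is_RInt_gen (fun x => exp (c * x)) (Rbar_locally m_infty) (at_point 0) (/ c).
Proof.
  intros Hc. replace (/ c) with (/ c - 0) by ring.
  apply (is_RInt_gen_of_is_derive (fun x => exp (c * x) * / c)).
  - intros x; auto_derive; [easy | field; lra].
  - intros x; apply (ex_derive_continuous (fun x => exp (c * x))); auto_derive; easy.
  - pose proof (is_lim_scal_r _ (/ c) _ _ (is_lim_exp_scal_m_infty c Hc)) as H.
    simpl in H; rewrite Rmult_0_l in H; exact H.
  - apply filterlim_at_point; rewrite Rmult_0_r, exp_0; ring.
Qed.

Lemma is_RInt_gen_exp_p_infty (c : R) : 0 < c ->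
  is_RInt_gen (fun x => exp (- c * x)) (at_point 0) (Rbar_locally p_infty) (/ c).
Proof.
  intros Hc. replace (/ c) with (0 - - / c) by ring.
  apply (is_RInt_gen_of_is_derive (fun x => exp (- c * x) * - / c)).
  - intros x; auto_derive; [easy | field; lra].
  - intros x; apply (ex_derive_continuous (fun x => exp (- c * x))); auto_derive; easy.
  - apply filterlim_at_point; rewrite Rmult_0_r, exp_0; ring.
  - pose proof (is_lim_scal_r _ (- / c) _ _ (is_lim_exp_neg_scal_p_infty c Hc)) as H.
    simpl in H; rewrite Rmult_0_l in H; exact H.
Qed.

Lemma is_RInt_gen_exp_neg_abs (c : R) : 0 < c ->
  is_RInt_gen (fun x => exp (- c * Rabs x))
    (Rbar_locally m_infty) (Rbar_locally p_infty) (2 / c).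
Proof.
  intros Hc. replace (2 / c) with (plus (/ c) (/ c)) by (unfold plus; simpl; field; lra).
  apply (is_RInt_gen_Chasles (V := R_NormedModule) _ 0).
  - apply (is_RInt_gen_ext (fun x => exp (c * x))); [| now apply is_RInt_gen_exp_m_infty].
    exists (fun x => x < 0) (fun y => y = 0); [now exists 0 | reflexivity |].
    intros x y Hx -> t Ht; simpl in Ht.
    rewrite Rmin_left, Rmax_right in Ht by lra.
    rewrite Rabs_left by lra; f_equal; ring.
  - apply (is_RInt_gen_ext (fun x => exp (- c * x))); [| now apply is_RInt_gen_exp_p_infty].
    exists (fun x => x = 0) (fun y => 0 < y); [reflexivity | now exists 0 |].
    intros x y -> Hy t Ht; simpl in Ht.
    rewrite Rmin_left, Rmax_right in Ht by lra.
    rewrite Rabs_right by lra; reflexivity.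
Qed.

Lemma mass_eq (w C : R) : 0 < w -> mass w C = C ^ 2 / sqrt w.
Proof.
  intros Hw. pose proof (sqrt_lt_R0 w Hw) as Hs.
  apply is_RInt_gen_unique.
  replace (C ^ 2 / sqrt w) with (scal (C ^ 2) (2 / (2 * sqrt w)))
    by (unfold scal; simpl; unfold mult; simpl; field; lra).
  apply (is_RInt_gen_ext (fun x => scal (C ^ 2) (exp (- (2 * sqrt w) * Rabs x)))).
  - apply filter_forall; intros ab x _.
    change (C ^ 2 * exp (- (2 * sqrt w) * Rabs x) = Rabs (psi w C x) ^ 2).
    rewrite pow2_abs; unfold psi; rewrite Rpow_mult_distr; f_equal.
    rewrite <- Rsqr_pow2; unfold Rsqr; rewrite <- exp_plus; f_equal; ring.
  - apply (is_RInt_gen_scal (V := R_NormedModule) (fun x => exp (- (2 * sqrt w) * Rabs x))).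
    apply is_RInt_gen_exp_neg_abs; lra.
Qed.

Lemma is_derive_iff_is_lim_slope (f : R -> R) (x l : R) :
  is_derive f x l <-> is_lim (fun h => (f (x + h) - f x) / h) 0 l.
Proof.
  rewrite is_derive_Reals, <- is_lim_spec. split.
  - intros H eps. destruct (H eps (cond_pos eps)) as [d Hd].
    exists d; intros h Hh Hh0. apply Hd; [exact Hh0 |].
    change (Rabs (h - 0) < d) in Hh; rewrite Rminus_0_r in Hh; exact Hh.
  - intros H eps Heps. destruct (H (mkposreal eps Heps)) as [d Hd].
    exists d; intros h Hh0 Hh. apply Hd; [| exact Hh0].
    change (Rabs (h - 0) < d); rewrite Rminus_0_r; exact Hh.
Qed.

Lemma is_derive_local_inverse (f g : R -> R) (y0 l : R) :
  is_derive f (g y0) l -> l <> 0 -> continuous g y0 ->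
  locally y0 (fun y => f (g y) = y) -> is_derive g y0 (/ l).
Proof.
  (* Along the increment k h = g (y0 + h) - x0, which tends to 0 and vanishes only at
     h = 0 because f o g = id, the difference quotient of g at y0 is the reciprocal of
     that of f at x0. *)
  intros Hf Hl Hg Hfg.
  set (x0 := g y0) in *.
  set (k := fun h => g (y0 + h) - x0).
  assert (Hfx0 : f x0 = y0) by exact (locally_singleton _ _ Hfg).
  assert (Hk : is_lim k 0 (k 0)).
  { apply is_lim_continuity, continuity_pt_filterlim.
    apply (continuous_minus (fun h => g (y0 + h)) (fun _ => x0)); [| apply continuous_const].
    apply (continuous_comp (fun h => y0 + h) g).
    - apply (continuous_plus (fun _ => y0) (fun h => h)); [apply continuous_const | apply continuous_id].
    - rewrite Rplus_0_r; exact Hg. }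
  replace (k 0) with 0 in Hk by (unfold k, x0; rewrite Rplus_0_r; ring).
  assert (Hnear : locally 0 (fun h => f (x0 + k h) = y0 + h)).
  { destruct Hfg as [d Hd]; exists d; intros h Hh.
    unfold k; replace (x0 + (g (y0 + h) - x0)) with (g (y0 + h)) by ring.
    apply Hd. change (Rabs (y0 + h - y0) < d); change (Rabs (h - 0) < d) in Hh.
    now replace (y0 + h - y0) with (h - 0) by ring. }
  assert (Hk0 : Rbar_locally' 0 (fun h => k h <> 0)).
  { change (locally 0 (fun h => h <> 0 -> k h <> 0)).
    apply (filter_imp (fun h => f (x0 + k h) = y0 + h)); [| exact Hnear].
    intros h E Hh0 Hkh. apply Hh0. rewrite Hkh, Rplus_0_r, Hfx0 in E. lra. }
  assert (Hslope : Rbar_locally' 0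
            (fun h => / ((f (x0 + k h) - f x0) / k h) = (g (y0 + h) - g y0) / h)).
  { change (locally 0 (fun h => h <> 0 ->
              / ((f (x0 + k h) - f x0) / k h) = (g (y0 + h) - g y0) / h)).
    apply (filter_imp (fun h => f (x0 + k h) = y0 + h /\ (h <> 0 -> k h <> 0)));
      [| now apply filter_and].
    intros h [E Hkh] Hh0. specialize (Hkh Hh0). rewrite E, Hfx0.
    unfold k in *; fold x0; field; now split. }
  apply is_derive_iff_is_lim_slope, (is_lim_ext_loc _ _ _ _ Hslope).
  apply (is_lim_inv (fun h => (f (x0 + k h) - f x0) / k h) 0 l); [| congruence].
  apply (is_lim_comp (fun k => (f (x0 + k) - f x0) / k) k 0 l 0).
  - now apply is_derive_iff_is_lim_slope.
  - exact Hk.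
  - revert Hk0; apply filter_imp; intros h Hkh E; apply Hkh; now injection E.
Qed.

Lemma is_derive_omega_of (a a' : R -> R) (C : R) :
  (forall x, is_derive a x (a' x)) ->
  is_derive (omega_of a) C (a (C ^ 2) * a' (C ^ 2) * C).
Proof.
  intros Ha. unfold omega_of. auto_derive.
  - exists (a' (C * (C * 1))); apply Ha.
  - rewrite (is_derive_unique a _ _ (Ha _)); simpl; field.
Qed.

Lemma is_derive_mass_along (C : R -> R) (w0 dC : R) :
  0 < w0 -> is_derive C w0 dC ->
  is_derive (fun w => mass w (C w)) w0
    (2 * C w0 * dC / sqrt w0 - C w0 ^ 2 / (2 * sqrt w0 ^ 3)).
Proof.
  intros Hw0 HC. pose proof (sqrt_lt_R0 w0 Hw0) as Hs.
  apply (is_derive_ext_loc (fun w => C w ^ 2 / sqrt w)).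
  { apply (filter_imp (fun w => 0 < w)); [| exact (open_gt 0 w0 Hw0)].
    intros w Hw; symmetry; now apply mass_eq. }
  auto_derive.
  - repeat split; [now exists dC | exact Hw0 | lra].
  - replace (Derive (fun x => C x) w0) with dC by (symmetry; now apply is_derive_unique).
    field; lra.
Qed.

Lemma Rdiv_lt_swap (A K t : R) : 0 < K -> 0 < t -> (A / t < K <-> A / K < t).
Proof. intros HK Ht. rewrite !Rlt_div_l by lra. now rewrite Rmult_comm. Qed.

Lemma Rlt_div_swap (A K t : R) : 0 < K -> 0 < t -> (K < A / t <-> t < A / K).
Proof. intros HK Ht. rewrite <- !Rlt_div_r by lra. now rewrite Rmult_comm. Qed.

Lemma sqrt_omega_of (a : R -> R) (C : R) : 0 <= a (C ^ 2) ->
  sqrt (omega_of a C) = a (C ^ 2) / 2.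
Proof.
  intros HA. unfold omega_of.
  replace (a (C ^ 2) ^ 2 / 4) with ((a (C ^ 2) / 2) ^ 2) by field.
  apply sqrt_pow2; lra.
Qed.

Lemma is_derive_mass_Cinv (a a' Cinv : R -> R) (C0 : R) :
  (forall x, is_derive a x (a' x)) ->
  0 < C0 -> 0 < a (C0 ^ 2) -> a' (C0 ^ 2) <> 0 ->
  Cinv (omega_of a C0) = C0 -> continuous Cinv (omega_of a C0) ->
  locally (omega_of a C0) (fun w => omega_of a (Cinv w) = w) ->
  is_derive (fun w => mass w (Cinv w)) (omega_of a C0)
    (4 / a (C0 ^ 2) ^ 3 * (a (C0 ^ 2) / a' (C0 ^ 2) - C0 ^ 2)).
Proof.
  intros Ha HC0 HA HA' HCinv0 HCinv Hinv.
  pose proof (sqrt_omega_of a C0 (Rlt_le _ _ HA)) as Hsqrt.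
  set (A := a (C0 ^ 2)) in *; set (A' := a' (C0 ^ 2)) in *; set (w0 := omega_of a C0) in *.
  assert (HdC : is_derive Cinv w0 (/ (A * A' * C0))).
  { apply (is_derive_local_inverse (omega_of a)); [| | exact HCinv | exact Hinv].
    - rewrite HCinv0; now apply is_derive_omega_of.
    - repeat apply Rmult_integral_contrapositive_currified; lra. }
  replace (4 / A ^ 3 * (A / A' - C0 ^ 2))
    with (2 * Cinv w0 * / (A * A' * C0) / sqrt w0 - Cinv w0 ^ 2 / (2 * sqrt w0 ^ 3))
    by (rewrite HCinv0, Hsqrt; field; lra).
  apply is_derive_mass_along; [unfold w0, omega_of; fold A; nra | exact HdC].
Qed.

Theorem lemma3p3 :
  forall (a a' : R -> R) (C0 : R) (Cinv : R -> R),
    (* a is C^1 with derivative a' *)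
    (forall x, is_derive a x (a' x)) ->
    (forall x, continuous a' x) ->
    0 < C0 -> 0 < a (C0 ^ 2) ->
    (* Cinv is the (continuous) local inverse of C |-> omega(C) near C0 *)
    Cinv (omega_of a C0) = C0 ->
    continuous Cinv (omega_of a C0) ->
    (exists del : posreal, forall w,
        Rabs (w - omega_of a C0) < del -> omega_of a (Cinv w) = w) ->
    ((a' (C0 ^ 2) < 0 \/ a (C0 ^ 2) / C0 ^ 2 < a' (C0 ^ 2)) ->
       exists d, is_derive (fun w => mass w (Cinv w)) (omega_of a C0) d /\ d < 0)
    /\
    (0 < a' (C0 ^ 2) < a (C0 ^ 2) / C0 ^ 2 ->
       exists d, is_derive (fun w => mass w (Cinv w)) (omega_of a C0) d /\ 0 < d).
Proof.
  intros a a' C0 Cinv Ha _ HC0 HA HCinv0 HCinv [del Hdel].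
  assert (Hderiv := is_derive_mass_Cinv a a' Cinv C0 Ha HC0 HA).
  set (A := a (C0 ^ 2)) in *; set (A' := a' (C0 ^ 2)) in *.
  assert (HK : 0 < C0 ^ 2) by (apply pow_lt; lra).
  assert (HA3 : 0 < 4 / A ^ 3) by (apply Rdiv_lt_0_compat; [lra | apply pow_lt; lra]).
  assert (HAK : 0 < A / C0 ^ 2) by (apply Rdiv_lt_0_compat; lra).
  split; intros Hcase; exists (4 / A ^ 3 * (A / A' - C0 ^ 2)).
  - assert (Hlt : A / A' < C0 ^ 2).
    { destruct Hcase as [Hneg | Hbig].
      - pose proof (Rdiv_pos_neg A A' HA Hneg); lra.
      - apply Rdiv_lt_swap; lra. }
    split; [| nra].
    apply Hderiv; [destruct Hcase; lra | exact HCinv0 | exact HCinv | now exists del].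
  - assert (Hgt : C0 ^ 2 < A / A') by (apply Rlt_div_swap; lra).
    split; [| apply Rmult_lt_0_compat; lra].
    apply Hderiv; [lra | exact HCinv0 | exact HCinv | now exists del].
Qed.
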